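(* Let $i:\mathbb{A}\to\mathbb{B}$ be a virtual double functor which is fully faithful, injective on objects, and injective on loose arrows. Then $i$ is the equalizer of its cokernel pair $q_1,q_2:\mathbb{B}\rightrightarrows\mathbb{B}\cup_{\mathbb{A}}\mathbb{B}$; in particular $i$ is a regular monomorphism.
   Context: A virtual double category (VDC) has objects, tight arrows forming a category, loose arrows, and $n$-ary multicells from a composable path of $n$ loose arrows to a loose arrow with two tight sides, with identities and associative unital composition; a virtual double functor (VDF) preserves all structure strictly, and the category of VDCs and VDFs is cocomplete. A VDF $i:\mathbb{A}\to\mathbb{B}$ is fully faithful if it is fully faithful on underlying tight categories and, for every path $\varphi$ of loose arrows and loose arrow $\psi$ of $\mathbb{A}$, the induced map from multicells of $\mathbb{A}$ with loose source $\varphi$ and target $\psi$ to multicells of $\mathbb{B}$ with loose source $i(\varphi)$ and target $i(\psi)$ is a bijection. The cokernel pair is the pair of coprojections of the pushout $\mathbb{B}\cup_{\mathbb{A}}\mathbb{B}$ of $i$ along itself. *)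

(* Virtual double categories, presented "unityped": one carrier per sort
   (objects, tight arrows, loose arrows, multicells) with boundary maps and
   total operations; the VDC axioms and the preservation conditions of
   virtual double functors are only imposed on composable inputs. *)
From mathcomp Require Import all_boot.
Set Implicit Arguments. Unset Strict Implicit. Unset Printing Implicit Defensive.

Record vdc_data := VdcData {
  vob : Type;
  vth : Type;
  vlo : Type;
  vce : Type;
  tdom : vth -> vob; tcod : vth -> vob;
  tid : vob -> vth;
  tcomp : vth -> vth -> vth;        (* tcomp g f = g o f (meaningful if tcod f = tdom g) *)
  ldom : vlo -> vob; lcod : vlo -> vob;
  cleft : vce -> vth; cright : vce -> vth;
  csrc : vce -> seq vlo;
  ctgt : vce -> vlo;
  cid : vlo -> vce;
  (* ccomp a (k, bs): composite of a with the path of cells bs (a path in the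
     graph whose vertices are tight arrows and whose edges are cells), starting
     at the vertex k (k matters only when bs is empty, i.e. for whiskering a
     nullary piece by a tight arrow). *)
  ccomp : vce -> vth * seq vce -> vce }.

Arguments tdom {v} _. Arguments tcod {v} _. Arguments tid {v} _.
Arguments tcomp {v} _ _. Arguments ldom {v} _. Arguments lcod {v} _.
Arguments cleft {v} _. Arguments cright {v} _. Arguments csrc {v} _.
Arguments ctgt {v} _. Arguments cid {v} _. Arguments ccomp {v} _ _.

Section Paths.
Variable C : vdc_data.

Fixpoint lpath (x : vob C) (ps : seq (vlo C)) (y : vob C) : Prop :=
  match ps with
  | [::] => x = y
  | p :: ps' => ldom p = x /\ lpath (lcod p) ps' y
  end.

Definition is_lpath (x : vob C) (ps : seq (vlo C)) : Prop := exists y, lpath x ps y.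

Fixpoint cadj (bs : seq (vce C)) : Prop :=
  match bs with
  | b1 :: ((b2 :: _) as bs') => cright b1 = cleft b2 /\ cadj bs'
  | _ => True
  end.

Definition cpath_ok (kb : vth C * seq (vce C)) : Prop :=
  (match kb.2 with [::] => True | b :: _ => cleft b = kb.1 end) /\ cadj kb.2.

Definition cpath_end (kb : vth C * seq (vce C)) : vth C :=
  last kb.1 (map cright kb.2).

Definition composable (a : vce C) (kb : vth C * seq (vce C)) : Prop :=
  [/\ cpath_ok kb, tcod kb.1 = tdom (cleft a) & map ctgt kb.2 = csrc a].

Definition comp_left (a : vce C) (kb : vth C * seq (vce C)) : vth C :=
  tcomp (cleft a) kb.1.
Definition comp_right (a : vce C) (kb : vth C * seq (vce C)) : vth C :=
  tcomp (cright a) (cpath_end kb).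

Fixpoint split_cp (sh : seq nat) (m : vth C) (gs : seq (vce C))
  : seq (vth C * seq (vce C)) :=
  match sh with
  | [::] => [::]
  | n :: sh' => (m, take n gs) :: split_cp sh' (cpath_end (m, take n gs)) (drop n gs)
  end.

Record is_vdc : Prop := {
  tid_dom : forall x : vob C, tdom (tid x) = x;
  tid_cod : forall x : vob C, tcod (tid x) = x;
  tcomp_dom : forall f g : vth C, tcod f = tdom g -> tdom (tcomp g f) = tdom f;
  tcomp_cod : forall f g : vth C, tcod f = tdom g -> tcod (tcomp g f) = tcod g;
  tcomp_id_r : forall f : vth C, tcomp f (tid (tdom f)) = f;
  tcomp_id_l : forall f : vth C, tcomp (tid (tcod f)) f = f;
  tcomp_assoc : forall f g h : vth C, tcod f = tdom g -> tcod g = tdom h ->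
      tcomp h (tcomp g f) = tcomp (tcomp h g) f;
  cell_src : forall c : vce C, lpath (tdom (cleft c)) (csrc c) (tdom (cright c));
  cell_left : forall c : vce C, tcod (cleft c) = ldom (ctgt c);
  cell_right : forall c : vce C, tcod (cright c) = lcod (ctgt c);
  cid_src : forall p : vlo C, csrc (cid p) = [:: p];
  cid_tgt : forall p : vlo C, ctgt (cid p) = p;
  cid_left : forall p : vlo C, cleft (cid p) = tid (ldom p);
  cid_right : forall p : vlo C, cright (cid p) = tid (lcod p);
  ccomp_src : forall a kb, composable a kb -> csrc (ccomp a kb) = flatten (map csrc kb.2);
  ccomp_tgt : forall a kb, composable a kb -> ctgt (ccomp a kb) = ctgt a;
  ccomp_left : forall a kb, composable a kb -> cleft (ccomp a kb) = comp_left a kb;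
  ccomp_right : forall a kb, composable a kb -> cright (ccomp a kb) = comp_right a kb;
  ccomp_id_r : forall a : vce C, ccomp a (tid (tdom (cleft a)), map cid (csrc a)) = a;
  ccomp_id_l : forall b : vce C, ccomp (cid (ctgt b)) (cleft b, [:: b]) = b;
  ccomp_assoc : forall a kb mg, composable a kb -> composable (ccomp a kb) mg ->
      ccomp (ccomp a kb) mg =
      ccomp a (tcomp kb.1 mg.1,
               [seq ccomp bp.1 bp.2 |
                 bp <- zip kb.2 (split_cp [seq size (csrc b) | b <- kb.2] mg.1 mg.2)])
}.

End Paths.

Record vdc := Vdc { vdata :> vdc_data; vdc_axioms : is_vdc vdata }.

Section Functors.
Variables A B : vdc_data.

Record is_vdf (fo : vob A -> vob B) (ft : vth A -> vth B) (fl : vlo A -> vlo B)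
    (fc : vce A -> vce B) : Prop := {
  ft_dom : forall f, tdom (ft f) = fo (tdom f);
  ft_cod : forall f, tcod (ft f) = fo (tcod f);
  ft_id : forall x, ft (tid x) = tid (fo x);
  ft_comp : forall f g, tcod f = tdom g -> ft (tcomp g f) = tcomp (ft g) (ft f);
  fl_dom : forall p, ldom (fl p) = fo (ldom p);
  fl_cod : forall p, lcod (fl p) = fo (lcod p);
  fc_left : forall c, cleft (fc c) = ft (cleft c);
  fc_right : forall c, cright (fc c) = ft (cright c);
  fc_src : forall c, csrc (fc c) = map fl (csrc c);
  fc_tgt : forall c, ctgt (fc c) = fl (ctgt c);
  fc_id : forall p, fc (cid p) = cid (fl p);
  fc_comp : forall a kb, composable a kb ->
      fc (ccomp a kb) = ccomp (fc a) (ft kb.1, map fc kb.2)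
}.
End Functors.

Record vdf (A B : vdc) := Vdf {
  fo : vob A -> vob B; ft : vth A -> vth B; fl : vlo A -> vlo B; fc : vce A -> vce B;
  vdf_axioms : is_vdf fo ft fl fc }.

Definition vdf_eq (A B : vdc) (F G : vdf A B) : Prop :=
  [/\ forall x, fo F x = fo G x, forall f, ft F f = ft G f,
      forall p, fl F p = fl G p & forall c, fc F c = fc G c].

Definition comp_eq (A B B' D : vdc) (F : vdf A B) (G : vdf B D)
    (F' : vdf A B') (G' : vdf B' D) : Prop :=
  [/\ forall x, fo G (fo F x) = fo G' (fo F' x),
      forall f, ft G (ft F f) = ft G' (ft F' f),
      forall p, fl G (fl F p) = fl G' (fl F' p)
    & forall c, fc G (fc F c) = fc G' (fc F' c)].

Definition comp_eq1 (A B D : vdc) (F : vdf A B) (G : vdf B D) (H : vdf A D) : Prop :=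
  [/\ forall x, fo G (fo F x) = fo H x,
      forall f, ft G (ft F f) = ft H f,
      forall p, fl G (fl F p) = fl H p
    & forall c, fc G (fc F c) = fc H c].

Definition fully_faithful (A B : vdc) (i : vdf A B) : Prop :=
  [/\
      (forall f g : vth A, tdom f = tdom g -> tcod f = tcod g -> ft i f = ft i g -> f = g),
      (forall (x y : vob A) (h : vth B), tdom h = fo i x -> tcod h = fo i y ->
          exists f : vth A, [/\ tdom f = x, tcod f = y & ft i f = h]),
      (forall (x : vob A) (ps : seq (vlo A)) (q : vlo A) (c c' : vce A),
          is_lpath x ps ->
          tdom (cleft c) = x -> csrc c = ps -> ctgt c = q ->
          tdom (cleft c') = x -> csrc c' = ps -> ctgt c' = q ->
          fc i c = fc i c' -> c = c')
    &
      (forall (x : vob A) (ps : seq (vlo A)) (q : vlo A) (d : vce B),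
          is_lpath x ps ->
          tdom (cleft d) = fo i x -> csrc d = map (fl i) ps -> ctgt d = fl i q ->
          exists c : vce A, [/\ tdom (cleft c) = x, csrc c = ps, ctgt c = q & fc i c = d])].

Definition is_cokernel_pair (A B P : vdc) (i : vdf A B) (q1 q2 : vdf B P) : Prop :=
  comp_eq i q1 i q2 /\
  forall (X : vdc) (f1 f2 : vdf B X), comp_eq i f1 i f2 ->
    (exists u : vdf P X, comp_eq1 q1 u f1 /\ comp_eq1 q2 u f2) /\
    (forall u v : vdf P X, comp_eq1 q1 u f1 -> comp_eq1 q2 u f2 ->
                           comp_eq1 q1 v f1 -> comp_eq1 q2 v f2 -> vdf_eq u v).

Definition is_equalizer (A B P : vdc) (i : vdf A B) (q1 q2 : vdf B P) : Prop :=
  comp_eq i q1 i q2 /\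
  forall (X : vdc) (f : vdf X B), comp_eq f q1 f q2 ->
    (exists g : vdf X A, comp_eq1 g i f) /\
    (forall g h : vdf X A, comp_eq1 g i f -> comp_eq1 h i f -> vdf_eq g h).

(* Map B into the chaotic virtual double category on the objects {true, false}
   (exactly one cell for every boundary), once by the constant labelling
   [true] and once by the indicator of the image of i on objects and loose
   arrows.  The two agree after precomposition with i, so they factor through
   the cokernel pair; hence every f : X -> B equalizing q1 and q2 lands in the
   image of i on objects and loose arrows.  Full faithfulness then lifts f
   along i on tight arrows and multicells, and since i is injective on all
   four sorts the lift is a virtual double functor and is unique. *)
From mathcomp Require Import all_boot.
From Stdlib Require Import ClassicalDescription IndefiniteDescription.
Set Implicit Arguments. Unset Strict Implicit. Unset Printing Implicit Defensive.

Section CellPaths.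
Variable C : vdc_data.

Lemma cpath_ok_cons (k : vth C) b bs :
  cpath_ok (k, b :: bs) <-> cleft b = k /\ cpath_ok (cright b, bs).
Proof.
rewrite /cpath_ok /=; case: bs => [|b' bs] /=; first tauto.
by split=> -[-> [-> ?]].
Qed.

Lemma cpath_ok_take_drop (k : vth C) bs n : cpath_ok (k, bs) ->
  cpath_ok (k, take n bs) /\ cpath_ok (cpath_end (k, take n bs), drop n bs).
Proof.
elim: bs k n => [|b bs IH] k [|n] //.
by rewrite /= !cpath_ok_cons => -[-> /(IH _ n) []].
Qed.

End CellPaths.

Lemma cpath_ok_map (C D : vdc_data) (tf : vth C -> vth D) (cf : vce C -> vce D) :
  (forall c, cleft (cf c) = tf (cleft c)) -> (forall c, cright (cf c) = tf (cright c)) ->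
  forall k bs, cpath_ok (k, bs) -> cpath_ok (tf k, map cf bs).
Proof.
move=> cf_left cf_right k bs; elim: bs k => [|b bs IH] k //.
by rewrite !cpath_ok_cons cf_left cf_right => -[<- /IH].
Qed.

Section Chaotic.
Variables (V : eqType) (L : Type).

Definition cedge := (V * V * L)%type.

Fixpoint is_edge_path (x : V) (s : seq cedge) : bool :=
  if s is e :: s' then (e.1.1 == x) && is_edge_path e.1.2 s' else true.

Definition edge_path_end (x : V) (s : seq cedge) : V := last x [seq e.1.2 | e <- s].

Lemma is_edge_path_cat x s t :
  is_edge_path x (s ++ t) = is_edge_path x s && is_edge_path (edge_path_end x s) t.
Proof. by elim: s x => [|e s IH] x //=; rewrite IH andbA. Qed.

Lemma edge_path_end_cat x s t :
  edge_path_end x (s ++ t) = edge_path_end (edge_path_end x s) t.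
Proof. by rewrite /edge_path_end map_cat last_cat. Qed.

(* The start object is only needed for cells with an empty source path. *)
Definition ccell := {c : V * seq cedge * cedge | is_edge_path c.1.1 c.1.2}.

Definition ccell_start (c : ccell) : V := (val c).1.1.
Definition ccell_path (c : ccell) : seq cedge := (val c).1.2.
Definition ccell_target (c : ccell) : cedge := (val c).2.

Definition ccell_id (e : cedge) : ccell :=
  exist _ (e.1.1, [:: e], e) (introT andP (conj (eqxx _) isT)).

(* Falls back to [a] when the composite path is not composable. *)
Definition ccell_comp (a : ccell) (kb : V * V * seq ccell) : ccell :=
  insubd a (kb.1.1, flatten [seq ccell_path b | b <- kb.2], ccell_target a).

Definition chaotic_data : vdc_data :=
  @VdcData V (V * V) cedge ccell
    fst snd (fun x => (x, x)) (fun g f => (f.1, g.2))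
    (fun e => e.1.1) (fun e => e.1.2)
    (fun c => (ccell_start c, (ccell_target c).1.1))
    (fun c => (edge_path_end (ccell_start c) (ccell_path c), (ccell_target c).1.2))
    ccell_path ccell_target ccell_id ccell_comp.

Lemma lpath_chaotic x s y :
  lpath (C := chaotic_data) x s y <-> is_edge_path x s /\ edge_path_end x s = y.
Proof.
elim: s x => [|e s IH] x /=; first by split=> [->|[]].
rewrite IH; split=> [[-> [-> <-]]|[/andP[/eqP -> ->] <-]] //.
by rewrite eqxx.
Qed.

Lemma cpath_ok_chaotic (k : V * V) (bs : seq ccell) :
  cpath_ok (C := chaotic_data) (k, bs) ->
  is_edge_path k.1 (flatten [seq ccell_path b | b <- bs]) /\
  edge_path_end k.1 (flatten [seq ccell_path b | b <- bs]) =
    (cpath_end (C := chaotic_data) (k, bs)).1.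
Proof.
elim: bs k => [|b bs IH] k //; rewrite cpath_ok_cons => -[<- /IH[ok_bs end_bs]].
by rewrite /= is_edge_path_cat edge_path_end_cat (valP b).
Qed.

Lemma val_ccell_comp a (kb : V * V * seq ccell) :
  is_edge_path kb.1.1 (flatten [seq ccell_path b | b <- kb.2]) ->
  val (ccell_comp a kb) = (kb.1.1, flatten [seq ccell_path b | b <- kb.2], ccell_target a).
Proof. by move=> ok; rewrite insubdK. Qed.

Lemma val_ccell_comp_ok a k bs : cpath_ok (C := chaotic_data) (k, bs) ->
  val (ccell_comp a (k, bs)) = (k.1, flatten [seq ccell_path b | b <- bs], ccell_target a).
Proof. by case/cpath_ok_chaotic=> ok _; rewrite val_ccell_comp. Qed.

Lemma flatten_ccell_path_split (bs : seq ccell) m gs :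
  cpath_ok (C := chaotic_data) (m, gs) ->
  flatten [seq ccell_path c | c <- [seq ccell_comp bp.1 bp.2 |
    bp <- zip bs (split_cp (C := chaotic_data) [seq size (ccell_path b) | b <- bs] m gs)]]
  = flatten [seq ccell_path c | c <- take (sumn [seq size (ccell_path b) | b <- bs]) gs].
Proof.
elim: bs m gs => [|b bs IH] m gs ok; first by rewrite take0.
have [ok1 ok2] := cpath_ok_take_drop (size (ccell_path b)) ok.
rewrite /= takeD map_cat flatten_cat -(IH _ _ ok2).
by rewrite {1}/ccell_path val_ccell_comp_ok.
Qed.

Lemma chaotic_is_vdc : is_vdc chaotic_data.
Proof.
split=> //.
- by case.
- by case.
- by move=> c; apply/lpath_chaotic; split; [exact: (valP c)|].
- by move=> a [k bs] [ok _ _]; rewrite /= {1}/ccell_path val_ccell_comp_ok.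
- by move=> a [k bs] [ok _ _]; rewrite /= {1}/ccell_target val_ccell_comp_ok.
- by move=> a [k bs] [ok _ _]; rewrite /= /ccell_start /ccell_target !val_ccell_comp_ok.
- move=> a [k bs] [ok _ _].
  rewrite /= /ccell_start /ccell_path /ccell_target !val_ccell_comp_ok //=.
  by case: (cpath_ok_chaotic ok) => _ ->.
- move=> [[[x s] e] ok]; apply: val_inj.
  have ccell_path_ids : flatten [seq ccell_path c | c <- map ccell_id s] = s.
    by elim: (s) => //= e' s' ->.
  by rewrite val_ccell_comp /= ccell_path_ids.
- by move=> [[[x s] e] ok]; apply: val_inj; rewrite val_ccell_comp /= cats0.
- move=> a [k bs] [m gs] [okk _ _] [okm _ tgts]; apply: val_inj.
  have size_gs : size gs <= sumn [seq size (ccell_path b) | b <- bs].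
    rewrite -(size_map ccell_target) tgts /= {1}/ccell_path val_ccell_comp_ok //.
    by rewrite size_flatten /shape -map_comp.
  have := flatten_ccell_path_split bs okm; rewrite take_oversize // => split_all.
  have [okf _] := cpath_ok_chaotic okm.
  rewrite val_ccell_comp_ok // val_ccell_comp /= split_all //.
  by rewrite /ccell_target val_ccell_comp_ok.
Qed.

Definition chaotic : vdc := Vdc chaotic_is_vdc.

End Chaotic.

Section ToChaotic.
Variables (V : eqType) (L : Type) (B : vdc) (ob : vob B -> V) (lab : vlo B -> L).
Let axB := vdc_axioms B.

Definition to_cedge (p : vlo B) : cedge V L := (ob (ldom p), ob (lcod p), lab p).

Lemma lpath_to_chaotic x s y :
  lpath x s y -> lpath (C := chaotic V L) (ob x) (map to_cedge s) (ob y).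
Proof. by elim: s x => [|p s IH] x /= => [->|[<- /IH]]. Qed.

Lemma is_edge_path_to_cedge (c : vce B) :
  is_edge_path (ob (tdom (cleft c))) (map to_cedge (csrc c)).
Proof. by have /lpath_chaotic[] := lpath_to_chaotic (cell_src axB c). Qed.

Definition to_ccell (c : vce B) : ccell V L :=
  exist _ (ob (tdom (cleft c)), map to_cedge (csrc c), to_cedge (ctgt c))
    (is_edge_path_to_cedge c).

Lemma to_chaotic_is_vdf :
  is_vdf (B := chaotic V L) ob (fun h => (ob (tdom h), ob (tcod h))) to_cedge to_ccell.
Proof.
split=> //.
- by move=> x; rewrite (tid_dom axB) (tid_cod axB).
- by move=> f g fg; rewrite (tcomp_dom axB fg) (tcomp_cod axB fg).
- by move=> c; rewrite /= /ccell_start /ccell_target /= (cell_left axB).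
- move=> c; rewrite /= /ccell_start /ccell_path /ccell_target /= (cell_right axB).
  by have /lpath_chaotic[_ ->] := lpath_to_chaotic (cell_src axB c).
- move=> p; apply: val_inj.
  by rewrite /= (cid_src axB) (cid_tgt axB) (cid_left axB) (tid_dom axB).
- move=> a [k bs] comp; apply: val_inj.
  have [_ k_a _] := comp.
  have start : tdom (cleft (ccomp a (k, bs))) = tdom k.
    by rewrite (ccomp_left axB comp) /comp_left (tcomp_dom axB k_a).
  have path : flatten [seq ccell_path b | b <- map to_ccell bs] =
              map to_cedge (csrc (ccomp a (k, bs))).
    by rewrite (ccomp_src axB comp) map_flatten -!map_comp.
  rewrite /= val_ccell_comp /=; last by rewrite path -start is_edge_path_to_cedge.
  by rewrite path start (ccomp_tgt axB comp).
Qed.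

Definition to_chaotic : vdf B (chaotic V L) := Vdf to_chaotic_is_vdf.

End ToChaotic.

Section VdfPaths.
Variables (A B : vdc) (F : vdf A B).
Let aF := vdf_axioms F.

Lemma lpath_map x s y : lpath x s y -> lpath (fo F x) (map (fl F) s) (fo F y).
Proof.
elim: s x => [|p s IH] x /= => [->|[<- /IH]] //.
by rewrite (fl_dom aF) (fl_cod aF).
Qed.

Lemma lpath_map_inj x s y : injective (fo F) ->
  lpath (fo F x) (map (fl F) s) (fo F y) -> lpath x s y.
Proof.
move=> inj; elim: s x => [|p s IH] x /= => [/inj|[]] //.
by rewrite (fl_dom aF) (fl_cod aF) => /inj <- /IH.
Qed.

End VdfPaths.

Section InjectiveVdf.
Variables (X A B : vdc) (i : vdf A B) (f : vdf X B).
Hypotheses (io : injective (fo i)) (it : injective (ft i))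
           (il : injective (fl i)) (ic : injective (fc i)).
Let ai := vdf_axioms i.
Let af := vdf_axioms f.

Lemma comp_eq1_cancel (g h : vdf X A) : comp_eq1 g i f -> comp_eq1 h i f -> vdf_eq g h.
Proof.
move=> [go gt gl gc] [ho ht hl hc]; split=> x.
- by apply: io; rewrite go ho.
- by apply: it; rewrite gt ht.
- by apply: il; rewrite gl hl.
- by apply: ic; rewrite gc hc.
Qed.

Variables (go : vob X -> vob A) (gt : vth X -> vth A)
          (gl : vlo X -> vlo A) (gc : vce X -> vce A).
Hypotheses (goE : forall x, fo i (go x) = fo f x) (gtE : forall h, ft i (gt h) = ft f h)
           (glE : forall p, fl i (gl p) = fl f p) (gcE : forall c, fc i (gc c) = fc f c).

Lemma lift_is_vdf : is_vdf go gt gl gc.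
Proof.
have gt_dom h : tdom (gt h) = go (tdom h).
  by apply: io; rewrite -(ft_dom ai) gtE goE (ft_dom af).
have gt_cod h : tcod (gt h) = go (tcod h).
  by apply: io; rewrite -(ft_cod ai) gtE goE (ft_cod af).
have gc_left c : cleft (gc c) = gt (cleft c).
  by apply: it; rewrite -(fc_left ai) gcE gtE (fc_left af).
have gc_right c : cright (gc c) = gt (cright c).
  by apply: it; rewrite -(fc_right ai) gcE gtE (fc_right af).
have gc_src c : csrc (gc c) = map gl (csrc c).
  by apply: (inj_map il); rewrite -(fc_src ai) gcE (fc_src af) -map_comp (eq_map glE).
have gc_tgt c : ctgt (gc c) = gl (ctgt c).
  by apply: il; rewrite -(fc_tgt ai) gcE glE (fc_tgt af).
split=> //.
- by move=> x; apply: it; rewrite gtE (ft_id af) (ft_id ai) goE.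
- move=> h k hk; apply: it.
  have hk' : tcod (gt h) = tdom (gt k) by rewrite gt_dom gt_cod hk.
  by rewrite (ft_comp ai hk') !gtE (ft_comp af hk).
- by move=> p; apply: io; rewrite -(fl_dom ai) glE goE (fl_dom af).
- by move=> p; apply: io; rewrite -(fl_cod ai) glE goE (fl_cod af).
- by move=> p; apply: ic; rewrite gcE (fc_id af) (fc_id ai) glE.
- move=> a [k bs] comp; apply: ic.
  have comp' : composable (gc a) (gt k, map gc bs).
    have [ok k_a tgts] := comp; split.
    - exact: cpath_ok_map gc_left gc_right _ _ ok.
    - by rewrite /= gt_cod gc_left gt_dom k_a.
    - by rewrite /= gc_src -tgts -!map_comp (eq_map gc_tgt).
  rewrite gcE (fc_comp af comp) (fc_comp ai comp') /= gcE gtE -map_comp.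
  by rewrite (eq_map gcE).
Qed.

End InjectiveVdf.

Section FullyFaithful.
Variables (A B : vdc) (i : vdf A B).
Hypotheses (ff : fully_faithful i) (io : injective (fo i)) (il : injective (fl i)).
Let ai := vdf_axioms i.

Lemma ff_ft_inj : injective (ft i).
Proof.
have [faithful _ _ _] := ff; move=> f g fg; apply: faithful => //.
  by apply: io; rewrite -!(ft_dom ai) fg.
by apply: io; rewrite -!(ft_cod ai) fg.
Qed.

Lemma ff_fc_inj : injective (fc i).
Proof.
have [_ _ cell_inj _] := ff; move=> c c' cc'.
have src : csrc c' = csrc c by apply: (inj_map il); rewrite -!(fc_src ai) cc'.
have tgt : ctgt c' = ctgt c by apply: il; rewrite -!(fc_tgt ai) cc'.
have start : tdom (cleft c') = tdom (cleft c).
  by apply: io; rewrite -!(ft_dom ai) -!(fc_left ai) cc'.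
apply: (cell_inj (tdom (cleft c)) (csrc c) (ctgt c)) => //.
by exists (tdom (cright c)); apply: (cell_src (vdc_axioms A)).
Qed.

Lemma ff_factor (X : vdc) (f : vdf X B) :
  (forall x, exists a, fo i a = fo f x) -> (forall p, exists a, fl i a = fl f p) ->
  exists g : vdf X A, comp_eq1 g i f.
Proof.
move=> hx hl; have af := vdf_axioms f.
have [go goE] := functional_choice _ hx; have [gl glE] := functional_choice _ hl.
have [gt gtE] : exists gt : vth X -> vth A, forall h, ft i (gt h) = ft f h.
  apply: (functional_choice (fun h a => ft i a = ft f h)) => h.
  have [_ full _ _] := ff.
  have dom_h : tdom (ft f h) = fo i (go (tdom h)) by rewrite (ft_dom af) goE.
  have cod_h : tcod (ft f h) = fo i (go (tcod h)) by rewrite (ft_cod af) goE.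
  by have [a [_ _ <-]] := full _ _ _ dom_h cod_h; exists a.
have [gc gcE] : exists gc : vce X -> vce A, forall c, fc i (gc c) = fc f c.
  apply: (functional_choice (fun c a => fc i a = fc f c)) => c.
  have [_ _ _ full] := ff.
  have src : is_lpath (go (tdom (cleft c))) (map gl (csrc c)).
    exists (go (tdom (cright c))); apply: (lpath_map_inj io).
    rewrite !goE -map_comp (eq_map glE).
    exact: lpath_map (cell_src (vdc_axioms X) c).
  have start : tdom (cleft (fc f c)) = fo i (go (tdom (cleft c))).
    by rewrite (fc_left af) (ft_dom af) goE.
  have src_c : csrc (fc f c) = map (fl i) (map gl (csrc c)).
    by rewrite (fc_src af) -map_comp (eq_map glE).
  have tgt_c : ctgt (fc f c) = fl i (gl (ctgt c)) by rewrite (fc_tgt af) glE.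
  by have [a [_ _ _ <-]] := full _ _ _ _ src start src_c tgt_c; exists a.
exists (Vdf (lift_is_vdf io ff_ft_inj il ff_fc_inj goE gtE glE gcE)).
by split.
Qed.

End FullyFaithful.

Definition in_imageb (T U : Type) (F : T -> U) (y : U) : bool :=
  if excluded_middle_informative (exists x, F x = y) then true else false.

Lemma in_imagebP (T U : Type) (F : T -> U) y : reflect (exists x, F x = y) (in_imageb F y).
Proof. by rewrite /in_imageb; case: excluded_middle_informative => h; constructor. Qed.

Lemma comp_eq_postcomp (X B P D : vdc) (f : vdf X B) (q1 q2 : vdf B P) (u : vdf P D)
    (g1 g2 : vdf B D) :
  comp_eq f q1 f q2 -> comp_eq1 q1 u g1 -> comp_eq1 q2 u g2 -> comp_eq f g1 f g2.
Proof.
move=> [Eo Et El Ec] [Uo1 Ut1 Ul1 Uc1] [Uo2 Ut2 Ul2 Uc2]; split=> x.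
- by rewrite -Uo1 -Uo2 Eo.
- by rewrite -Ut1 -Ut2 Et.
- by rewrite -Ul1 -Ul2 El.
- by rewrite -Uc1 -Uc2 Ec.
Qed.

Section ImageIndicator.
Variables (A B : vdc) (i : vdf A B).

Definition true_indicator : vdf B (chaotic bool bool) :=
  to_chaotic (fun _ => true) (fun _ => true).

Definition image_indicator : vdf B (chaotic bool bool) :=
  to_chaotic (in_imageb (fo i)) (in_imageb (fl i)).

Lemma image_indicator_comp : comp_eq i true_indicator i image_indicator.
Proof.
have ai := vdf_axioms i.
have in_o a : in_imageb (fo i) (fo i a) by apply/in_imagebP; exists a.
have in_l p : in_imageb (fl i) (fl i p) by apply/in_imagebP; exists p.
have edge p : to_cedge (fun _ => true) (fun _ => true) (fl i p) =
              to_cedge (in_imageb (fo i)) (in_imageb (fl i)) (fl i p).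
  by rewrite /to_cedge (fl_dom ai) (fl_cod ai) !in_o in_l.
split=> [x|h|p|c] /=; first by rewrite in_o.
- by rewrite (ft_dom ai) (ft_cod ai) !in_o.
- exact: edge.
apply: val_inj; rewrite /= (fc_left ai) (ft_dom ai) (fc_src ai) (fc_tgt ai) in_o edge.
by rewrite -!map_comp (eq_map edge).
Qed.

Lemma image_indicator_equalized (X : vdc) (f : vdf X B) :
  comp_eq f true_indicator f image_indicator ->
  (forall x, exists a, fo i a = fo f x) /\ (forall p, exists a, fl i a = fl f p).
Proof.
move=> [Eo _ El _]; split=> [x|p]; apply/in_imagebP; first by move: (Eo x) => /= <-.
by move/(congr1 snd): (El p) => /= <-.
Qed.

End ImageIndicator.

Theorem lemma5p16 (A B : vdc) (i : vdf A B) :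
  fully_faithful i -> injective (fo i) -> injective (fl i) ->
  forall (P : vdc) (q1 q2 : vdf B P),
    is_cokernel_pair i q1 q2 -> is_equalizer i q1 q2.
Proof.
move=> ff io il P q1 q2 [q12 pushout]; split=> // X f fq12.
have [[u [u1 u2]] _] := pushout _ _ _ (image_indicator_comp i).
have [in_o in_l] := image_indicator_equalized (comp_eq_postcomp fq12 u1 u2).
split.
- exact: (ff_factor ff io il in_o in_l).
- exact: comp_eq1_cancel io (ff_ft_inj ff io) il (ff_fc_inj ff io il).
Qed.
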